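(* Let $\alpha,\beta\in CBV^*[0,1]$ and $v,w\in CBV[0,1]$ satisfy $\alpha[e]=\beta[e]=0$, where $e(t)=1$ for $t\in[0,1]$, and $v(t)+w(t)=1$ for every $t\in[0,1]$. Define $F_1(x)(t)=\alpha[x]v(t)+\beta[x]w(t)$, $t\in[0,1]$. Then $F_1\colon CBV[0,1]\to CBV[0,1]$ is a bounded linear operator with $\|F_1\|\le\|\alpha\|+\|\alpha-\beta\|\cdot\|w\|_{BV}$ and $\|F_1^{n+2}\|\le\|\alpha-\beta\|\cdot|\alpha[v]-\beta[v]|^n\cdot\|\alpha[v]v+\beta[v]w\|_{BV}$ for all $n\ge0$. In particular, the spectral radius satisfies $r(F_1)\le|\alpha[v]-\beta[v]|$.
   Context: $BV[0,1]$ is the Banach space of real functions of bounded (Jordan) variation on $[0,1]$ with norm $\|f\|_{BV}=|f(0)|+\operatorname{var}_{[0,1]}f$, where $\operatorname{var}_{[0,1]}f=\sup\sum_{i=1}^n|f(t_i)-f(t_{i-1})|$ over all finite partitions $0=t_0<\dots<t_n=1$. $CBV[0,1]$ is its closed subspace of continuous functions, and $CBV^*[0,1]$ is its dual, with the operator norm. The norm of $F_1$ is the operator norm on $CBV[0,1]$; $r(A)=\lim_{n\to\infty}\|A^n\|^{1/n}$. By convention $|\alpha[v]-\beta[v]|^0=1$ even if $\alpha[v]-\beta[v]=0$. *)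

From HB Require Import structures.
From mathcomp Require Import all_boot all_order all_algebra.
From mathcomp Require Import all_classical all_reals all_analysis.
Set Implicit Arguments. Unset Strict Implicit. Unset Printing Implicit Defensive.
Import Order.TTheory GRing.Theory Num.Theory.
Import numFieldNormedType.Exports.
Local Open Scope classical_set_scope.
Local Open Scope ring_scope.

Section Defs.
Variable R : realType.

(** Elements of CBV[0,1]: functions continuous on [0,1] with bounded variation
    on [0,1] (values outside [0,1] are irrelevant). *)
Definition CBV (f : R -> R) : Prop :=
  {within `[0, 1], continuous f} /\ bounded_variation 0 1 f.

Definition var01 (f : R -> R) : R := fine (total_variation 0 1 f).

Definition bvnorm (f : R -> R) : R := `|f 0| + var01 f.

Definition cbv_ball1 : set (R -> R) := [set x | CBV x /\ bvnorm x <= 1].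

Definition is_CBV_dual (alpha : (R -> R) -> R) : Prop :=
  (forall (a : R) (x y : R -> R), CBV x -> CBV y ->
     alpha (fun t => a * x t + y t) = a * alpha x + alpha y) /\
  (exists C : R, forall x, CBV x -> `|alpha x| <= C * bvnorm x).

Definition dual_norm (alpha : (R -> R) -> R) : R :=
  sup [set `|alpha x| | x in cbv_ball1].

Definition is_CBV_bounded_op (T : (R -> R) -> (R -> R)) : Prop :=
  (forall x, CBV x -> CBV (T x)) /\
  (forall (a : R) (x y : R -> R), CBV x -> CBV y ->
     {in `[0, 1], T (fun t => a * x t + y t) =1 (fun t => a * T x t + T y t)}) /\
  (exists C : R, forall x, CBV x -> bvnorm (T x) <= C * bvnorm x).

Definition op_norm (T : (R -> R) -> (R -> R)) : R :=
  sup [set bvnorm (T x) | x in cbv_ball1].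

(** The sequence ||A^n||^(1/n) whose limit is the spectral radius r(A). *)
Definition specrad_seq (T : (R -> R) -> (R -> R)) (n : nat) : R :=
  op_norm (iter n T) `^ (n%:R)^-1.

Definition F1 (alpha beta : (R -> R) -> R) (v w : R -> R) (x : R -> R) : R -> R :=
  fun t => alpha x * v t + beta x * w t.

End Defs.

From HB Require Import structures.
From mathcomp Require Import all_boot all_order all_algebra.
From mathcomp Require Import all_classical all_reals all_analysis.
From mathcomp Require Import ring.
Import Order.TTheory GRing.Theory Num.Theory.
Import numFieldNormedType.Exports.
Local Open Scope classical_set_scope.
Local Open Scope ring_scope.
Set Implicit Arguments. Unset Strict Implicit.

(* Since alpha and beta vanish on constants and v + w = 1 on [0, 1], every such
   functional gamma satisfies gamma[w] = - gamma[v], hence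
   gamma[F1 x] = (alpha - beta)[x] gamma[v].  Therefore F1 (F1 x) = (alpha - beta)[x] u
   with u = F1 v = alpha[v] v + beta[v] w, and F1 u = (alpha[v] - beta[v]) u, so
   F1^(n+2) is the rank-one operator x |-> (alpha - beta)[x] (alpha[v] - beta[v])^n u.
   Its norm is exactly ||alpha - beta|| |alpha[v] - beta[v]|^n ||u||_BV, whose
   (n+2)-th root tends to |alpha[v] - beta[v]| (or to 0).  The bound on ||F1||
   comes from F1 x = alpha[x] - (alpha - beta)[x] w on [0, 1]. *)

Section variation.
Context {R : numDomainType}.
Implicit Types (a b k : R) (f g : R -> R) (s : seq R).

Lemma itv_partition_nth_in a b s m : a <= b -> itv_partition a b s ->
  nth b (a :: s) m \in `[a, b].
Proof.
move=> ab abs; have [ms|ms] := ltnP m (size s).+1.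
  by rewrite in_itv /= itv_partition_nth_ge // itv_partition_nth_le.
by rewrite nth_default // in_itv /= ab lexx.
Qed.

Lemma eq_variation_in a b f g s : itv_partition a b s ->
  {in `[a, b], f =1 g} -> variation a b f s = variation a b g s.
Proof.
move=> abs fg; have ab := itv_partition_le abs.
have abs_in m : nth b (a :: s) m \in `[a, b] by exact: itv_partition_nth_in.
rewrite /variation; apply: eq_bigr => i _ /=.
by rewrite (fg _ (abs_in i.+1)) (fg _ (abs_in i)).
Qed.

Lemma eq_variations_in a b f g : {in `[a, b], f =1 g} ->
  variations a b f = variations a b g.
Proof.
by move=> fg; apply/seteqP; split => _ [s abs <-]; exists s;
  rewrite // (eq_variation_in abs fg).
Qed.

Lemma variationZ a b k f s :
  variation a b (fun t => k * f t) s = `|k| * variation a b f s.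
Proof.
by rewrite /variation mulr_sumr; apply: eq_bigr => i _; rewrite -normrM mulrBr.
Qed.

Lemma variation_cst a b k s : variation a b (fun=> k) s = 0.
Proof. by rewrite /variation big1 // => i _; rewrite subrr normr0. Qed.

Lemma bounded_variationZ a b k f : bounded_variation a b f ->
  bounded_variation a b (fun t => k * f t).
Proof.
move=> [M ubM]; exists (`|k| * M) => _ [s abs <-].
by rewrite variationZ ler_wpM2l // ubM //; exists s.
Qed.

Lemma bounded_variation_cst a b k : bounded_variation a b (fun=> k).
Proof. by exists 0 => _ [s _ <-]; rewrite variation_cst. Qed.

End variation.

Lemma sup_imageMl {R : realType} {T : Type} (k : R) (G : T -> R) (B : set T) :
  0 <= k -> B !=set0 -> has_ubound (G @` B) ->
  sup [set k * G x | x in B] = k * sup (G @` B).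
Proof.
move=> k0 [x0 Bx0] ubG.
have GB0 : G @` B !=set0 by exists (G x0), x0.
have kGB0 : [set k * G x | x in B] !=set0 by exists (k * G x0), x0.
have ub_kG : ubound [set k * G x | x in B] (k * sup (G @` B)).
  by move=> _ [x Bx <-]; rewrite ler_wpM2l // ub_le_sup //; exists x.
apply: le_anti; rewrite ge_sup //=.
have ubkG : has_ubound [set k * G x | x in B] by exists (k * sup (G @` B)).
have [k_eq0|k_neq0] := eqVneq k 0.
  have kGx0 : [set k * G x | x in B] (k * G x0) by exists x0.
  by subst k; rewrite mul0r (le_trans _ (ub_le_sup ubkG kGx0)) ?mul0r.
have kgt0 : 0 < k by rewrite lt_def k_neq0.
rewrite mulrC -ler_pdivlMr //; apply: ge_sup => // _ [x Bx <-].
by rewrite ler_pdivlMr // mulrC ub_le_sup //; exists x.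
Qed.

Section bvnorm.
Context {R : realType}.
Implicit Types (k M : R) (f g : R -> R) (s : seq R).

Lemma var01E f : bounded_variation 0 1 f -> var01 f = sup (variations 0 1 f).
Proof.
by move=> bf; rewrite /var01 /total_variation ereal_sup_EFin //; exact: variations_neq0.
Qed.

Lemma var01_ge0 f : 0 <= var01 f.
Proof. by apply/fine_ge0/total_variation_ge0; exact: ler01. Qed.

Lemma variation_le_var01 f s : bounded_variation 0 1 f -> itv_partition 0 1 s ->
  variation 0 1 f s <= var01 f.
Proof. by move=> bf s01; rewrite var01E // ub_le_sup //; exists s. Qed.

Lemma var01_le f M : (forall s, itv_partition 0 1 s -> variation 0 1 f s <= M) ->
  var01 f <= M.
Proof.
move=> ubM; have bf : bounded_variation 0 1 f by exists M => _ [s s01 <-]; exact: ubM.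
rewrite var01E //; apply: ge_sup => [|_ [s s01 <-]]; last exact: ubM.
exact: variations_neq0.
Qed.

Lemma eq_var01_in f g : {in `[0, 1], f =1 g} -> var01 f = var01 g.
Proof. by move=> fg; rewrite /var01 /total_variation (eq_variations_in fg). Qed.

Lemma var01Z k f : bounded_variation 0 1 f ->
  var01 (fun t => k * f t) = `|k| * var01 f.
Proof.
move=> bf; have bkf := bounded_variationZ k bf.
rewrite !var01E // /variations.
rewrite (eq_imagel (f' := fun s => `|k| * variation 0 1 f s)) => [|s _]; last first.
  exact: variationZ.
by rewrite sup_imageMl //; exists [:: 1]; exact: itv_partition1.
Qed.

Lemma var01_cst k : var01 (fun=> k) = 0.
Proof.
by apply/le_anti; rewrite var01_ge0 andbT var01_le // => s _; rewrite variation_cst.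
Qed.

Lemma var01DZ_le k f g : bounded_variation 0 1 f -> bounded_variation 0 1 g ->
  var01 (fun t => k * f t + g t) <= `|k| * var01 f + var01 g.
Proof.
move=> bf bg; apply: var01_le => s s01; apply: le_trans (variation_le _ _ _ _ _) _.
by rewrite variationZ lerD ?ler_wpM2l // variation_le_var01.
Qed.

Lemma bvnorm_ge0 f : 0 <= bvnorm f.
Proof. by rewrite addr_ge0 ?var01_ge0. Qed.

Lemma eq_bvnorm_in f g : {in `[0, 1], f =1 g} -> bvnorm f = bvnorm g.
Proof.
by move=> fg; rewrite /bvnorm (eq_var01_in fg) fg // in_itv /= lexx ler01.
Qed.

Lemma bvnormZ k f : bounded_variation 0 1 f ->
  bvnorm (fun t => k * f t) = `|k| * bvnorm f.
Proof. by move=> bf; rewrite /bvnorm var01Z // normrM mulrDr. Qed.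

Lemma bvnorm_cst k : bvnorm (fun=> k) = `|k|.
Proof. by rewrite /bvnorm var01_cst addr0. Qed.

Lemma bvnormDZ_le k f g : bounded_variation 0 1 f -> bounded_variation 0 1 g ->
  bvnorm (fun t => k * f t + g t) <= `|k| * bvnorm f + bvnorm g.
Proof.
move=> bf bg; rewrite /bvnorm mulrDr addrACA -normrM.
by rewrite lerD ?ler_normD ?var01DZ_le.
Qed.

Lemma CBV_cst k : CBV (fun=> k).
Proof. by split; [move=> x; exact: cst_continuous|exact: bounded_variation_cst]. Qed.

Lemma CBVZ k f : CBV f -> CBV (fun t => k * f t).
Proof.
move=> [cf bf]; split; last exact: bounded_variationZ.
move=> x; apply: (@continuousM _ _ (fun=> k) (f : subspace `[0, 1] -> R)).
  exact: cst_continuous.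
exact: cf.
Qed.

Lemma CBVD f g : CBV f -> CBV g -> CBV (fun t => f t + g t).
Proof.
move=> [cf bf] [cg bg]; split; last exact: bounded_variationD ltr01 bf bg.
by move=> x; exact: (@continuousD _ _ _ (f : subspace `[0, 1] -> R) g x (cf x) (cg x)).
Qed.

End bvnorm.

Section dual.
Context {R : realType}.
Implicit Types (k M : R) (x y u : R -> R) (phi psi : (R -> R) -> R)
  (T : (R -> R) -> R -> R).

Lemma dual0 phi : is_CBV_dual phi -> phi (fun=> 0) = 0.
Proof.
move=> [_ [C phiC]]; apply/eqP; rewrite -normr_le0.
by rewrite (le_trans (phiC _ (CBV_cst 0))) // bvnorm_cst normr0 mulr0.
Qed.

Lemma dual_bound phi : is_CBV_dual phi ->
  exists2 C : R, 0 <= C & forall x, CBV x -> `|phi x| <= C * bvnorm x.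
Proof.
move=> [_ [C phiC]]; exists (Num.max C 0) => [|x cx]; first by rewrite le_max lexx orbT.
by rewrite (le_trans (phiC x cx)) // ler_wpM2r ?bvnorm_ge0 // le_max lexx.
Qed.

Lemma eq_dual_in phi x y : is_CBV_dual phi -> CBV x -> CBV y ->
  {in `[0, 1], x =1 y} -> phi x = phi y.
Proof.
move=> dphi cx cy xy; have [C _ phiC] := dual_bound dphi.
have cyx : CBV (fun t => -1 * y t + x t) := CBVD (CBVZ (-1) cy) cx.
have := phiC _ cyx; rewrite dphi.1 // (@eq_bvnorm_in _ _ (fun=> 0)) => [|t t01].
  by rewrite bvnorm_cst normr0 mulr0 normr_le0 mulN1r addrC subr_eq0 => /eqP.
by rewrite xy // mulN1r addNr.
Qed.

Lemma dualZ phi k x : is_CBV_dual phi -> CBV x ->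
  phi (fun t => k * x t) = k * phi x.
Proof.
move=> dphi cx; have ckx : CBV (fun t => k * x t + 0) := CBVD (CBVZ k cx) (CBV_cst 0).
rewrite (eq_dual_in dphi (CBVZ k cx) ckx) => [|t _]; last by rewrite addr0.
by rewrite dphi.1 ?dual0 ?addr0 //; exact: CBV_cst.
Qed.

Lemma is_CBV_dualB phi psi : is_CBV_dual phi -> is_CBV_dual psi ->
  is_CBV_dual (fun x => phi x - psi x).
Proof.
move=> dphi dpsi; split => [k x y cx cy|]; first by rewrite dphi.1 // dpsi.1 //; ring.
have [C1 _ phiC1] := dual_bound dphi; have [C2 _ psiC2] := dual_bound dpsi.
exists (C1 + C2) => x cx; rewrite (le_trans (ler_normB _ _)) //.
by rewrite mulrDl lerD ?phiC1 ?psiC2.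
Qed.

Lemma dual_compl phi v w : is_CBV_dual phi -> CBV v -> CBV w ->
  phi (fun=> 1) = 0 -> (forall t, t \in `[0, 1] -> v t + w t = 1) ->
  phi w = - phi v.
Proof.
move=> dphi cv cw phi1 vw.
have cvw : CBV (fun t => 1 * v t + w t) := CBVD (CBVZ 1 cv) cw.
have phivw : phi (fun=> 1) = phi (fun t => 1 * v t + w t).
  by apply: eq_dual_in dphi (CBV_cst 1) cvw _ => t t01; rewrite mul1r vw.
by move: phivw; rewrite dphi.1 // phi1 mul1r => /eqP; rewrite eq_sym addrC addr_eq0 => /eqP.
Qed.

Lemma cbv_ball1_neq0 : @cbv_ball1 R !=set0.
Proof. by exists (fun=> 0); split; [exact: CBV_cst|rewrite bvnorm_cst normr0]. Qed.

Lemma has_ubound_dual phi : is_CBV_dual phi ->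
  has_ubound [set `|phi x| | x in @cbv_ball1 R].
Proof.
move=> /dual_bound[C C0 phiC]; exists C => _ [x [cx x1] <-].
by rewrite (le_trans (phiC x cx)) // ler_piMr.
Qed.

Lemma dual_norm_ub phi x : is_CBV_dual phi -> @cbv_ball1 R x -> `|phi x| <= dual_norm phi.
Proof. by move=> dphi x1; apply: ub_le_sup; [exact: has_ubound_dual|exists x]. Qed.

Lemma dual_norm_ge0 phi : is_CBV_dual phi -> 0 <= dual_norm phi.
Proof.
move=> dphi; have [x x1] := cbv_ball1_neq0.
exact: le_trans (normr_ge0 _) (dual_norm_ub dphi x1).
Qed.

Lemma op_norm_le T M : (forall x, @cbv_ball1 R x -> bvnorm (T x) <= M) -> op_norm T <= M.
Proof.
move=> TM; apply: ge_sup => [|_ [x x1 <-]]; last exact: TM.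
by have [x x1] := cbv_ball1_neq0; exists (bvnorm (T x)), x.
Qed.

Lemma op_norm_rank_one T phi u : is_CBV_dual phi -> CBV u ->
  (forall x, CBV x -> {in `[0, 1], T x =1 fun t => phi x * u t}) ->
  op_norm T = dual_norm phi * bvnorm u.
Proof.
move=> dphi [_ bu] Tphi; rewrite /op_norm (eq_imagel (f' := fun x => bvnorm u * `|phi x|)).
  rewrite sup_imageMl ?bvnorm_ge0 //.
  - exact: mulrC.
  - exact: cbv_ball1_neq0.
  - exact: has_ubound_dual.
by move=> x [cx _]; rewrite (eq_bvnorm_in (Tphi x cx)) bvnormZ // mulrC.
Qed.

End dual.

Section F1.
Context {R : realType} (alpha beta : (R -> R) -> R) (v w : R -> R).
Hypotheses (dalpha : is_CBV_dual alpha) (dbeta : is_CBV_dual beta).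
Hypotheses (cv : CBV v) (cw : CBV w).

Local Notation F := (F1 alpha beta v w).
Local Notation delta := (fun x => alpha x - beta x).

Lemma CBV_F1 x : CBV (F x).
Proof. exact: CBVD (CBVZ _ cv) (CBVZ _ cw). Qed.

Lemma F1Z k x : CBV x -> F (fun t => k * x t) = fun t => k * F x t.
Proof. by move=> cx; apply: funext => t; rewrite /F1 !dualZ //; ring. Qed.

Lemma is_CBV_bounded_op_F1 : is_CBV_bounded_op F.
Proof.
split; first by move=> x _; exact: CBV_F1.
split=> [k x y cx cy t _|]; first by rewrite /F1 dalpha.1 // dbeta.1 //; ring.
have [Ca _ alphaC] := dual_bound dalpha; have [Cb _ betaC] := dual_bound dbeta.
exists (Ca * bvnorm v + Cb * bvnorm w) => x cx.
rewrite (le_trans (bvnormDZ_le _ cv.2 (bounded_variationZ _ cw.2))) //.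
rewrite bvnormZ; last exact: cw.2.
rewrite mulrDl; apply: lerD; rewrite mulrAC ler_wpM2r ?bvnorm_ge0 //.
- exact: alphaC.
- exact: betaC.
Qed.

Hypotheses (alpha1 : alpha (fun=> 1) = 0) (beta1 : beta (fun=> 1) = 0).
Hypothesis vw1 : forall t, t \in `[0, 1] -> v t + w t = 1.

Lemma op_norm_F1_le : op_norm F <= dual_norm alpha + dual_norm delta * bvnorm w.
Proof.
apply: op_norm_le => x [cx x1].
rewrite (@eq_bvnorm_in _ _ (fun t => - delta x * w t + alpha x)) => [|t t01]; last first.
  by rewrite /F1 -[v t](addrK (w t)) vw1 //; ring.
rewrite (le_trans (bvnormDZ_le _ cw.2 (bounded_variation_cst _ _ _))) //.
rewrite bvnorm_cst normrN addrC lerD ?dual_norm_ub // ler_wpM2r ?bvnorm_ge0 //.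
by rewrite dual_norm_ub //; exact: is_CBV_dualB.
Qed.

Lemma dual_F1 phi x : is_CBV_dual phi -> phi (fun=> 1) = 0 -> CBV x ->
  phi (F x) = delta x * phi v.
Proof.
move=> dphi phi1 cx.
by rewrite /F1 dphi.1 ?dualZ ?(dual_compl dphi cv cw) //; [ring|exact: CBVZ].
Qed.

Lemma F1_F1 x t : CBV x -> F (F x) t = delta x * F v t.
Proof. by move=> cx; rewrite {1}/F1 !dual_F1 ?CBV_F1 // /F1; ring. Qed.

Lemma iter_F1 n x : CBV x -> iter n.+2 F x = fun t => delta x * delta v ^+ n * F v t.
Proof.
move=> cx; elim: n => [|n IHn].
  by apply: funext => t; rewrite /= F1_F1 // mulr1.
rewrite iterS IHn F1Z; last exact: CBV_F1.
by apply: funext => t; rewrite F1_F1 // exprSr; ring.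
Qed.

Lemma op_norm_iter_F1 n :
  op_norm (iter n.+2 F) = dual_norm delta * `|delta v| ^+ n * bvnorm (F v).
Proof.
rewrite (@op_norm_rank_one _ _ delta (fun t => delta v ^+ n * F v t)).
- by rewrite bvnormZ ?normrX ?mulrA //; exact: (CBV_F1 v).2.
- exact: is_CBV_dualB.
- exact: CBVZ (CBV_F1 v).
- by move=> x cx t _; rewrite iter_F1 // mulrA.
Qed.

End F1.

Lemma powR_geometric_cvg (R : realType) (a b : R) : 0 < a -> 0 < b ->
  (a * b ^+ n) `^ (n.+2%:R)^-1 @[n --> \oo] --> b.
Proof.
move=> a0 b0.
have -> : (fun n => (a * b ^+ n) `^ (n.+2%:R)^-1) =
    expR \o (fun n => ln b + (n.+2%:R)^-1 * (ln a - 2 * ln b)).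
  apply: funext => n /=; rewrite /powR gt_eqF ?mulr_gt0 ?exprn_gt0 //.
  rewrite lnM ?posrE ?exprn_gt0 // lnXn // -mulr_natr; congr expR.
  have n2_neq0 : n.+2%:R != 0 :> R by rewrite pnatr_eq0.
  by field.
rewrite -[X in _ --> X]lnK ?posrE //; apply: continuous_cvg; first exact: continuous_expR.
rewrite -[X in _ --> X]addr0; apply: cvgD; first exact: cvg_cst.
rewrite -(mul0r (ln a - 2 * ln b)); apply: cvgMl.
by have := @cvg_harmonic R; rewrite -cvg_shiftS.
Qed.

Lemma specrad_seq_geometric (R : realType) (T : (R -> R) -> R -> R) (a b : R) :
  0 <= a -> 0 <= b -> (forall n, op_norm (iter n.+2 T) = a * b ^+ n) ->
  cvgn (specrad_seq T) /\ limn (specrad_seq T) <= b.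
Proof.
move=> a0 b0 Tab.
suff [L TL Lb] : exists2 L, specrad_seq T @ \oo --> L & L <= b.
  by split; [exact: cvgP TL|rewrite (cvg_lim _ TL)].
have specradE n : specrad_seq T (n + 2) = (a * b ^+ n) `^ (n.+2%:R)^-1.
  by rewrite /specrad_seq addn2 Tab.
have [ab0|ab0] := eqVneq (a * b) 0.
  exists 0 => //; rewrite -(cvg_shiftn 3) /=.
  have -> : (fun n => specrad_seq T (n + 3)) = fun=> 0.
    apply: funext => n; rewrite -addSnnS specradE exprS mulrA ab0 mul0r powR0 //.
  exact: cvg_cst.
exists b => //; rewrite -(cvg_shiftn 2) /=.
have -> : (fun n => specrad_seq T (n + 2)) = fun n => (a * b ^+ n) `^ (n.+2%:R)^-1.
  by apply: funext => n; exact: specradE.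
move: ab0; rewrite mulf_eq0 negb_or => /andP[an0 bn0].
by apply: powR_geometric_cvg; rewrite lt_def ?an0 ?bn0.
Qed.

Unset Implicit Arguments.

Theorem lemma4p3 (R : realType) (alpha beta : (R -> R) -> R) (v w : R -> R) :
  is_CBV_dual alpha -> is_CBV_dual beta -> CBV v -> CBV w ->
  alpha (fun _ => 1) = 0 -> beta (fun _ => 1) = 0 ->
  (forall t, t \in `[0, 1] -> v t + w t = 1) ->
  [/\ is_CBV_bounded_op (F1 alpha beta v w),
      op_norm (F1 alpha beta v w) <=
        dual_norm alpha + dual_norm (fun x => alpha x - beta x) * bvnorm w,
      (forall n : nat,
        op_norm (iter n.+2 (F1 alpha beta v w)) <=
          dual_norm (fun x => alpha x - beta x) * `|alpha v - beta v| ^+ n *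
          bvnorm (fun t => alpha v * v t + beta v * w t)),
      cvgn (specrad_seq (F1 alpha beta v w)) &
      limn (specrad_seq (F1 alpha beta v w)) <= `|alpha v - beta v| ].
Proof.
move=> dalpha dbeta cv cw alpha1 beta1 vw1.
have opn := op_norm_iter_F1 dalpha dbeta cv cw alpha1 beta1 vw1.
have [cvg_specrad lim_specrad] := specrad_seq_geometric
  (mulr_ge0 (dual_norm_ge0 (is_CBV_dualB dalpha dbeta)) (bvnorm_ge0 (F1 alpha beta v w v)))
  (normr_ge0 (alpha v - beta v)) (fun n => etrans (opn n) (mulrAC _ _ _)).
split=> //.
- exact: is_CBV_bounded_op_F1.
- exact: op_norm_F1_le.
- by move=> n; rewrite opn.
Qed.
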